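(* Let $p:[0,\infty)\to\mathbb{R}$ be a non-increasing pricing function. Then the set of buyer types $$\Big\{(\theta,v)\ \Big|\ \min_{t\ge 0}\{p(t)+\theta t\}> v\Big\}$$ (the types who do not buy the item, whatever time they spend) is a convex subset of $\mathbb{R}^2$.
   Context: Model: a seller sells identical items in unlimited supply to unit-demand buyers. A buyer's type is $(\theta,v)$, where $\theta\ge 0$ is her cost per unit time (CPUT) and $v$ her valuation for the item. The seller posts a non-increasing pricing function $p$: a buyer who spends time $t\ge 0$ on the deal pays $p(t)$. A buyer of type $(\theta,v)$ buys the item iff $\min_{t\ge 0}\{p(t)+\theta t\}\le v$, where the minimum is taken to exist, as the model assumes when it defines the set $\arg\min_{t\ge 0}\{p(t)+\theta t\}$ of the buyer's best actions. *)

From Stdlib Require Import Reals.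
Open Scope R_scope.

Definition nonincreasing_on_nonneg (p : R -> R) : Prop :=
  forall s t, 0 <= s -> s <= t -> p t <= p s.

Definition is_min_cost (p : R -> R) (theta m : R) : Prop :=
  (exists t0, 0 <= t0 /\ p t0 + theta * t0 = m) /\
  (forall t, 0 <= t -> m <= p t + theta * t).

Definition non_buyers (p : R -> R) : R * R -> Prop :=
  fun x => 0 <= fst x /\ exists m, is_min_cost p (fst x) m /\ m > snd x.

Definition convex_R2 (S : R * R -> Prop) : Prop :=
  forall x y lam, S x -> S y -> 0 <= lam <= 1 ->
    S (lam * fst x + (1 - lam) * fst y, lam * snd x + (1 - lam) * snd y).

(* For each buyer the cost θ ↦ min_t (p t + θ t) is a pointwise minimum of functions
   affine in θ, hence concave; the non-buyers form the strict hypograph of this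
   concave function, which is convex. *)
From Stdlib Require Import Reals Lra Psatz.
Open Scope R_scope.

Lemma convex_comb_ge0 (x y lam : R) :
  0 <= x -> 0 <= y -> 0 <= lam <= 1 -> 0 <= lam * x + (1 - lam) * y.
Proof. intros; nra. Qed.

Lemma convex_comb_lt (a b c d lam : R) :
  a < c -> b < d -> 0 <= lam <= 1 -> lam * a + (1 - lam) * b < lam * c + (1 - lam) * d.
Proof.
  intros Hac Hbd Hlam.
  destruct (Req_dec lam 0) as [-> | Hpos]; [lra | nra].
Qed.

Lemma is_min_cost_concave (p : R -> R) (tx ty mx my mz lam : R) :
  0 <= lam <= 1 ->
  is_min_cost p tx mx -> is_min_cost p ty my ->
  is_min_cost p (lam * tx + (1 - lam) * ty) mz ->
  lam * mx + (1 - lam) * my <= mz.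
Proof.
  intros Hlam [_ Lx] [_ Ly] [[t0 [Ht0 <-]] _].
  specialize (Lx t0 Ht0); specialize (Ly t0 Ht0).
  nra.
Qed.

Theorem lemma1 (p : R -> R)
  (hp : nonincreasing_on_nonneg p)
  (hmin : forall theta, 0 <= theta -> exists m, is_min_cost p theta m) :
  convex_R2 (non_buyers p).
Proof.
  intros [tx vx] [ty vy] lam [Htx [mx [Mx Vx]]] [Hty [my [My Vy]]] Hlam; simpl in *.
  assert (Htz := convex_comb_ge0 tx ty lam Htx Hty Hlam).
  destruct (hmin _ Htz) as [mz Mz].
  split; [exact Htz |].
  exists mz; split; [exact Mz |]; simpl.
  pose proof (is_min_cost_concave p tx ty mx my mz lam Hlam Mx My Mz).
  pose proof (convex_comb_lt vx vy mx my lam Vx Vy Hlam).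
  lra.
Qed.
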